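(* Let $n\ge1$ and $d\in\mathbb{N}$, and define $N$ by $N(n,d)=N+1$. Let $X\subset\mathbb{R}^n$ be a self-similar set with $\operatorname{Hdeg}(X)\ge d+1$. Then $\tau^d_{N,\mathbf{s}}(X)=\mathcal{P}_d^*$ for every $\mathbf{s}\in X$.
   Context: $N(n,d):=\binom{n+d}{d}$, the dimension of the space $\mathcal{P}_d$ of real polynomials in $n$ variables of degree $\le d$; $\mathcal{P}_d^*$ is its dual. For $A\subset\mathbb{R}^n$, $\operatorname{Hdeg}(A)$ is the minimum degree of a nonzero polynomial vanishing on $A$ ($\infty$ if none exists). A map $\varphi:\mathbb{R}^n\to\mathbb{R}^n$ is a contraction if $\|\varphi(\mathbf{x})-\varphi(\mathbf{y})\|\le K\|\mathbf{x}-\mathbf{y}\|$ for some $K\in(0,1)$. Given contractions $\varphi_1,\dots,\varphi_p$, there is a unique nonempty compact $S$ with $S=\bigcup_i\varphi_i(S)$ (the attractor). A similarity transformation is an affine map preserving the angle of every ordered triple of points (equivalently $\|\varphi(\mathbf{x})-\varphi(\mathbf{y})\|=\lambda\|\mathbf{x}-\mathbf{y}\|$ for some $\lambda>0$). A set is self-similar if it is the attractor of $p\ge2$ contractions that are all similarity transformations. For $\mathbf{a}\in\mathbb{R}^n$ and $|\mathbf{p}|\le d$, $\delta^{(\mathbf{p})}_{\mathbf{a}}\in\mathcal{P}_d^*$ is $f\mapsto(-1)^{|\mathbf{p}|}\partial^{|\mathbf{p}|}f/\partial\mathbf{x}^{\mathbf{p}}(\mathbf{a})$, $\delta_{\mathbf{a}}=\delta^{(\mathbf{0})}_{\mathbf{a}}$.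 A bundle over $X$ is a subset $E\subset X\times\mathcal{P}_d^*$ whose fibres $E_{\mathbf{a}}=\{\xi:(\mathbf{a},\xi)\in E\}$ are linear subspaces. Higher order paratangent bundle $\tau^d_N(X)$: put $E_0=\{(\mathbf{a},\lambda\delta_{\mathbf{a}}):\mathbf{a}\in X,\lambda\in\mathbb{R}\}$. Given $E_k$, let $\Delta E_k$ be the set of $(\mathbf{a}_0,\dots,\mathbf{a}_N,\xi_0+\dots+\xi_N)\in X^{N+1}\times\mathcal{P}_d^*$ with $\mathbf{a}_i\in X$, $\xi_i\in E_{k,\mathbf{a}_i}$ and $|\mathbf{a}_i-\mathbf{a}_0|^{d-|\alpha|}\,|\xi_i((\mathbf{x}-\mathbf{a}_i)^\alpha)|\le1$ for all multi-indices $|\alpha|\le d$, $0\le i\le N$. Let $E'_k$ be the set of $(\mathbf{a},\xi)\in X\times\mathcal{P}_d^*$ with $(\mathbf{a},\dots,\mathbf{a},\xi)$ in the closure of $\Delta E_k$, and $E_{k+1}$ the bundle whose fibre at $\mathbf{a}$ is the linear span of $E'_{k,\mathbf{a}}$. The increasing sequence $E_k$ stabilizes and $\tau^d_N(X):=E_{2\dim\mathcal{P}_d^*}$; $\tau^d_{N,\mathbf{a}}(X)$ is its fibre at $\mathbf{a}$. *)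

From HB Require Import structures.
From mathcomp Require Import all_boot all_order all_algebra.
From mathcomp Require Import mpoly.
From mathcomp Require Import all_classical all_reals all_analysis.
Import Order.TTheory GRing.Theory Num.Theory.
Import numFieldTopology.Exports numFieldNormedType.Exports.

Unset Printing Implicit Defensive.

Local Open Scope classical_set_scope.
Local Open Scope ring_scope.

Definition coords {R : realType} {n : nat} (x : 'rV[R]_n) : 'I_n -> R :=
  fun i => x ord0 i.

Definition edist {R : realType} {n : nat} (x y : 'rV[R]_n) : R :=
  Num.sqrt (\sum_(i < n) (x ord0 i - y ord0 i) ^+ 2).

(* N(n,d) = binom(n+d, d) = dim P_d = dim P_d^*. *)
Definition Ndim (n d : nat) : nat := 'C(n + d, d).

(* P_d^* : a linear functional on P_d (polynomials in n variables of degree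
   <= d) is encoded by its values on the monomial basis
   { x^m : |m| <= d } of P_d, i.e. by a function on 'X_{1..n < d.+1}. *)
Definition dualP (R : realType) (n d : nat) := {ffun 'X_{1..n < d.+1} -> R}.

Definition dapp {R : realType} {n d : nat} (xi : dualP R n d)
  (f : {mpoly R[n]}) : R :=
  \sum_(m : 'X_{1..n < d.+1}) f@_m * xi m.

Definition delta {R : realType} {n : nat} (d : nat) (a : 'rV[R]_n) : dualP R n d :=
  [ffun m : 'X_{1..n < d.+1} => ('X_[(m : 'X_{1..n})] : {mpoly R[n]}).@[coords a]].

Definition shiftmon {R : realType} {n : nat} (a : 'rV[R]_n) (al : 'X_{1..n})
  : {mpoly R[n]} :=
  \prod_(i < n) ('X_i - (coords a i)%:MP) ^+ (al i).

Definition lspan {R : realType} {n d : nat} (S : set (dualP R n d)) : set (dualP R n d) :=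
  fun xi => exists s : seq (R * dualP R n d),
    (forall c, c \in s -> S c.2) /\ xi = \sum_(c <- s) c.1 *: c.2.

(* Bundles over X: predicates E a xi, i.e. subsets of X x P_d^*. *)
Definition bundle (R : realType) (n d : nat) := 'rV[R]_n -> dualP R n d -> Prop.

Definition E0 {R : realType} {n : nat} (d : nat) (X : set 'rV[R]_n) : bundle R n d :=
  fun a xi => X a /\ exists lam : R, xi = lam *: delta d a.

Definition DeltaE {R : realType} {n d : nat} (N : nat) (X : set 'rV[R]_n)
  (E : bundle R n d) : ('I_N.+1 -> 'rV[R]_n) -> dualP R n d -> Prop :=
  fun as_ xi =>
    (forall i, X (as_ i)) /\
    exists xis : 'I_N.+1 -> dualP R n d,
      (forall i, E (as_ i) (xis i)) /\
      xi = \sum_(i < N.+1) xis i /\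
      (forall (i : 'I_N.+1) (al : 'X_{1..n < d.+1}),
         edist (as_ i) (as_ ord0) ^+ (d - mdeg al) *
           `| dapp (xis i) (shiftmon (as_ i) al) | <= 1).

(* E'_k: (a,...,a,xi) lies in the closure of Delta E_k (closure in the
   finite-dimensional space (R^n)^{N+1} x P_d^*, written out with
   epsilon-neighbourhoods). *)
Definition Eprime {R : realType} {n d : nat} (N : nat) (X : set 'rV[R]_n)
  (E : bundle R n d) : bundle R n d :=
  fun a xi => X a /\
    forall eps : R, 0 < eps ->
      exists (as_ : 'I_N.+1 -> 'rV[R]_n) (eta : dualP R n d),
        DeltaE N X E as_ eta /\
        (forall i, edist (as_ i) a < eps) /\
        (forall m, `| eta m - xi m | < eps).

Fixpoint Eseq {R : realType} {n : nat} (d N : nat) (X : set 'rV[R]_n) (k : nat)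
  : bundle R n d :=
  match k with
  | 0 => E0 d X
  | k'.+1 => fun a xi => X a /\ lspan (Eprime N X (Eseq d N X k') a) xi
  end.

Definition paratangent {R : realType} {n : nat} (d N : nat) (X : set 'rV[R]_n)
  : bundle R n d :=
  Eseq d N X (2 * Ndim n d).

(* Hdeg(X) >= k : every nonzero polynomial vanishing on X has degree >= k
   (i.e. min degree >= k, with min of the empty set = infinity).
   For p != 0 the total degree of p is (msize p).-1. *)
Definition Hdeg_ge {R : realType} {n : nat} (X : set 'rV[R]_n) (k : nat) : Prop :=
  forall p : {mpoly R[n]}, p != 0 ->
    (forall x, X x -> p.@[coords x] = 0) -> (k <= (msize p).-1)%N.

Definition contraction {R : realType} {n : nat} (phi : 'rV[R]_n -> 'rV[R]_n) : Prop :=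
  exists K : R, 0 < K < 1 /\ forall x y, edist (phi x) (phi y) <= K * edist x y.

Definition affine_map {R : realType} {n : nat} (phi : 'rV[R]_n -> 'rV[R]_n) : Prop :=
  exists (A : 'M[R]_n) (b : 'rV[R]_n), forall x, phi x = x *m A + b.

Definition similarity {R : realType} {n : nat} (phi : 'rV[R]_n -> 'rV[R]_n) : Prop :=
  affine_map phi /\
  exists lam : R, 0 < lam /\ forall x y, edist (phi x) (phi y) = lam * edist x y.

(* S is the attractor of phi_1..phi_p: the (unique, by Hutchinson) nonempty
   compact S with S = U_i phi_i(S). *)
Definition is_attractor {R : realType} {n p : nat}
  (phi : 'I_p -> 'rV[R]_n -> 'rV[R]_n) (S : set 'rV[R]_n) : Prop :=
  S !=set0 /\ compact S /\ S = \bigcup_(i in [set: 'I_p]) (phi i @` S).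

Definition self_similar {R : realType} {n : nat} (X : set 'rV[R]_n) : Prop :=
  exists (p : nat) (phi : 'I_p -> 'rV[R]_n -> 'rV[R]_n),
    (2 <= p)%N /\
    (forall i, contraction (phi i) /\ similarity (phi i)) /\
    is_attractor phi X.

(* Since Hdeg(X) > d, the point evaluations at points of X span P_d^*, so some dim P_d^*
   points b_i of X have linearly independent evaluations.  Fix s in X and any point c.  By
   self-similarity, for every r0 > 0 there is a similarity psi of ratio r < r0 mapping X into
   itself with s in psi(X).  Point evaluations transform covariantly under affine maps, so
   writing delta_(psi^-1 c) = sum_i w_i delta_(b_i) gives delta_c = sum_i w_i delta_(psi b_i),
   with all psi b_i within r diam(X) of s.  The coefficients grow at most like
   (1 + |psi^-1 c|)^d = O(r^-d), while |psi b_i - psi b_j|^d <= (r diam X)^d, so the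
   weighted products in the definition of Delta E_0 are bounded by some C independent of r.
   Hence C^-1 delta_c is in the fibre of E'_0 at s for every c, and these functionals span
   P_d^*. *)

From Pilot Require Import Defs.
From HB Require Import structures.
From mathcomp Require Import all_boot all_order all_algebra.
From mathcomp Require Import mpoly.
From mathcomp Require Import all_classical all_reals all_analysis.
From mathcomp Require Import zify ring.
Import Order.TTheory GRing.Theory Num.Theory.
Import numFieldTopology.Exports numFieldNormedType.Exports.
(* Re-import so that [edist] is the Euclidean distance of Defs, not mathcomp-analysis' one. *)
Import Defs.
Local Open Scope classical_set_scope.
Local Open Scope ring_scope.

Local Notation nmonomials n d := #|{: 'X_{1..n < d.+1}}|.

Section MpolySize.
Context {R : idomainType} {n : nat}.
Implicit Types (p q : {mpoly R[n]}) (c : R).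

Lemma msizeM_le_pred p q : (msize (p * q) <= (msize p + msize q).-1)%N.
Proof.
have [->|nz_p] := eqVneq p 0; first by rewrite mul0r msize0.
have [->|nz_q] := eqVneq q 0; first by rewrite mulr0 msize0.
by rewrite msizeM.
Qed.

Lemma msize_prod_exp_le (F : 'I_n -> {mpoly R[n]}) (m : 'X_{1..n}) :
  (forall i, msize (F i) <= 2)%N -> (msize (\prod_(i < n) F i ^+ m i) <= (mdeg m).+1)%N.
Proof.
move=> F2; rewrite mdegE; elim/big_rec2: _ => [|i k P _ hP]; first by rewrite msize1.
have FX : (msize (F i ^+ m i) <= (m i).+1)%N.
  elim: (m i) => [|e IHe]; first by rewrite expr0 msize1.
  rewrite exprS; apply: leq_trans (msizeM_le_pred _ _) _.
  by have := F2 i; lia.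
by apply: leq_trans (msizeM_le_pred _ _) _; lia.
Qed.

Lemma msizeXU_le (i : 'I_n) : (msize ('X_i : {mpoly R[n]}) <= 2)%N.
Proof. by rewrite msizeX mdeg1. Qed.

Lemma msizeC_le c : (msize (c%:MP : {mpoly R[n]}) <= 1)%N.
Proof. by rewrite msizeC; case: (c != 0). Qed.

Lemma msize_XsubC (i : 'I_n) c : (msize ('X_i - c%:MP) <= 2)%N.
Proof.
apply: leq_trans (msizeD_le _ _) _.
by rewrite geq_max msizeXU_le msizeN (leq_trans (msizeC_le _)).
Qed.

Lemma msize_affine (a : 'I_n -> R) c : (msize (\sum_l a l *: 'X_l + c%:MP) <= 2)%N.
Proof.
apply: leq_trans (msizeD_le _ _) _; rewrite geq_max (leq_trans (msizeC_le _)) // andbT.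
elim/big_rec: _ => [|l p _ hp]; first by rewrite msize0.
apply: leq_trans (msizeD_le _ _) _.
by rewrite geq_max hp (leq_trans (msizeZ_le _ _)) ?msizeXU_le.
Qed.

End MpolySize.

Section PointEvaluations.
Context {R : realType} {n : nat} (d : nat).
Implicit Types (a t x y : 'rV[R]_n) (A : 'M[R]_n) (p f : {mpoly R[n]}) (xi : dualP R n d).

Lemma dapp_delta a p : (msize p <= d.+1)%N -> dapp (delta d a) p = p.@[coords a].
Proof.
move=> hp; rewrite {2}(mpolywE hp) /dapp raddf_sum /=.
by apply: eq_bigr => m _; rewrite mevalZ ffunE.
Qed.

Lemma dapp_comb (I : Type) (r : seq I) (c : I -> R) (xis : I -> dualP R n d) f :
  dapp (\sum_(i <- r) c i *: xis i) f = \sum_(i <- r) c i * dapp (xis i) f.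
Proof.
rewrite /dapp; under eq_bigr => m _ do rewrite sum_ffunE mulr_sumr.
rewrite exchange_big /=; apply: eq_bigr => i _; rewrite mulr_sumr.
by apply: eq_bigr => m _; rewrite ffunE /= mulrCA.
Qed.

Lemma dappZ (c : R) xi f : dapp (c *: xi) f = c * dapp xi f.
Proof. by have := @dapp_comb _ [:: tt] (fun=> c) (fun=> xi) f; rewrite !big_seq1. Qed.

Lemma delta_shiftmon a (al : 'X_{1..n < d.+1}) :
  dapp (delta d a) (shiftmon a al) = (al == 0%MM :> 'X_{1..n})%:R.
Proof.
have sz : (msize (shiftmon a al) <= d.+1)%N.
  apply: leq_trans (bmdeg al).
  by apply: msize_prod_exp_le => i; apply: msize_XsubC.
rewrite dapp_delta // /shiftmon rmorph_prod /=.
under eq_bigr do rewrite rmorphXn /= mevalB mevalXU mevalC subrr.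
case: eqP => [->|/eqP nz]; first by rewrite big1 // => i _; rewrite mnm0E.
have [i al_i] : exists i, al i != 0%N.
  apply/existsP; apply: contraR nz; rewrite negb_exists => /forallP al0.
  by apply/eqP/mnmP => i; rewrite mnm0E; apply/eqP; rewrite -[_ == _]negbK al0.
by rewrite (bigD1 i) //= expr0n (negbTE al_i) mul0r.
Qed.

Definition affine_coord (A : 'M[R]_n) (t : 'rV[R]_n) (j : 'I_n) : {mpoly R[n]} :=
  \sum_l A l j *: 'X_l + (t ord0 j)%:MP.

Definition affine_monomial (A : 'M[R]_n) (t : 'rV[R]_n) (m : 'X_{1..n}) : {mpoly R[n]} :=
  \prod_(j < n) affine_coord A t j ^+ m j.

Lemma affine_coordE A t x j : (affine_coord A t j).@[coords x] = (x *m A + t) ord0 j.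
Proof.
rewrite /affine_coord mevalD raddf_sum mevalC !mxE /=; congr (_ + _).
by apply: eq_bigr => l _; rewrite mevalZ mevalXU mulrC.
Qed.

Lemma delta_affine A t x (m : 'X_{1..n < d.+1}) :
  delta d (x *m A + t) m = dapp (delta d x) (affine_monomial A t m).
Proof.
rewrite dapp_delta; last first.
  apply: leq_trans (bmdeg m).
  by apply: msize_prod_exp_le => j; apply: msize_affine.
rewrite ffunE mevalX /affine_monomial rmorph_prod /=.
by apply: eq_bigr => j _; rewrite rmorphXn /= affine_coordE.
Qed.

Lemma delta_affine_comb A t (I : finType) (c : I -> R) (b : I -> 'rV[R]_n) y :
  delta d y = \sum_i c i *: delta d (b i) ->
  delta d (y *m A + t) = \sum_i c i *: delta d (b i *m A + t).
Proof.
move=> hy; apply/ffunP => m; rewrite delta_affine hy dapp_comb sum_ffunE.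
by apply: eq_bigr => i _; rewrite ffunE delta_affine.
Qed.

Definition dual_row xi : 'rV[R]_(nmonomials n d) := \row_j xi (enum_val j).

Definition delta_mx {k} (b : 'I_k -> 'rV[R]_n) : 'M[R]_(k, nmonomials n d) :=
  \matrix_i dual_row (delta d (b i)).

Lemma dual_row_inj : injective dual_row.
Proof.
move=> u v /rowP uv; apply/ffunP => m.
by have := uv (enum_rank m); rewrite !mxE enum_rankK.
Qed.

Lemma dual_row_comb (I : finType) (c : I -> R) (xis : I -> dualP R n d) :
  dual_row (\sum_i c i *: xis i) = \sum_i c i *: dual_row (xis i).
Proof.
apply/rowP => j; rewrite !mxE summxE sum_ffunE.
by apply: eq_bigr => i _; rewrite !mxE ffunE.
Qed.

Lemma delta_decomp (b : 'I_(nmonomials n d) -> 'rV[R]_n) xi : delta_mx b \in unitmx ->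
  xi = \sum_i (dual_row xi *m invmx (delta_mx b)) ord0 i *: delta d (b i).
Proof.
move=> bU; apply: dual_row_inj; rewrite dual_row_comb.
rewrite -{1}(mulmxKV bU (dual_row xi)) mulmx_sum_row.
by apply: eq_bigr => i _; rewrite rowK.
Qed.

Section Unisolvence.
Variable X : set 'rV[R]_n.
Hypothesis hX : Hdeg_ge X d.+1.

Lemma delta_mx_ker m (C : 'M[R]_(nmonomials n d, m)) :
  (forall x, X x -> dual_row (delta d x) *m C = 0) -> C = 0.
Proof.
move=> hC; apply/matrixP => i0 l; rewrite mxE.
pose p : {mpoly R[n]} := \sum_i C i l *: 'X_[enum_val i].
have p_coef : p@_(enum_val i0) = C i0 l.
  rewrite raddf_sum (bigD1 i0) //= mcoeffZ mcoeffX eqxx mulr1 big1 ?addr0 // => i ne.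
  by rewrite mcoeffZ mcoeffX val_eqE (inj_eq enum_val_inj) (negbTE ne) mulr0.
have p_size : (msize p <= d.+1)%N.
  rewrite /p; elim/big_rec: _ => [|i q _ hq]; first by rewrite msize0.
  apply: leq_trans (msizeD_le _ _) _.
  by rewrite geq_max hq (leq_trans (msizeZ_le _ _)) // msizeX bmdeg.
have p_vanish x : X x -> p.@[coords x] = 0.
  move=> Xx; have /matrixP/(_ ord0 l) := hC x Xx; rewrite !mxE => <-.
  rewrite /p raddf_sum /=; apply: eq_bigr => i _.
  by rewrite mevalZ !mxE ffunE mulrC.
have p0 : p = 0.
  apply/eqP; apply: contraT => /hX/(_ p_vanish).
  by move: p_size; lia.
by rewrite -p_coef p0 mcoeff0.
Qed.

Lemma delta_rows_full m (B : 'M[R]_(m, nmonomials n d)) :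
  (forall x, X x -> (dual_row (delta d x) <= B)%MS) -> row_full B.
Proof.
move=> hB; rewrite -cokermx_eq0; apply/eqP/delta_mx_ker => x Xx.
by apply/eqP; rewrite -submxE hB.
Qed.

Lemma exists_unisolvent_points :
  exists b : 'I_(nmonomials n d) -> 'rV[R]_n,
    (forall i, X (b i)) /\ delta_mx b \in unitmx.
Proof.
suff greedy j : (j <= nmonomials n d)%N ->
    exists b : 'I_j -> 'rV[R]_n, (forall i, X (b i)) /\ row_free (delta_mx b).
  by have [b [Xb bfree]] := greedy _ (leqnn _); exists b; rewrite -row_free_unit.
elim: j => [|j IHj] jK.
  by exists (fun=> 0); split => [[]//|]; rewrite /row_free -leqn0 rank_leq_row.
have [b [Xb bfree]] := IHj (ltnW jK).
have [x [Xx xb]] : exists x, X x /\ ~~ (dual_row (delta d x) <= delta_mx b)%MS.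
  apply: contrapT => nx.
  have /eqP bfull : row_full (delta_mx b).
    apply: delta_rows_full => x Xx; apply: contrapT => /negP xb; apply: nx.
    by exists x.
  by move: (rank_leq_row (delta_mx b)); rewrite bfull leqNgt jK.
pose b' (i : 'I_(1 + j)) := if fintype.split i is inr i' then b i' else x.
exists b'; split => [i|]; first by rewrite /b'; case: fintype.split.
have -> : delta_mx b' = col_mx (dual_row (delta d x)) (delta_mx b).
  apply/matrixP => i l; rewrite !mxE /b'.
  by case: fintype.split => [i1|i2]; rewrite !mxE // (ord1 i1).
have := submx_refl (col_mx (dual_row (delta d x)) (delta_mx b)).
rewrite col_mx_sub => /andP[_ b_sub].
have b_lt : (delta_mx b < col_mx (dual_row (delta d x)) (delta_mx b))%MS.
  by rewrite ltmxE b_sub col_mx_sub negb_and xb.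
by rewrite -row_leq_rank; have := rank_ltmx b_lt; rewrite (eqP bfree).
Qed.

End Unisolvence.

End PointEvaluations.

Lemma card_bmultinom_le n d : (nmonomials n d <= Ndim n d)%N.
Proof.
pose f (m : 'X_{1..n < d.+1}) : 'X_{1..n.+1} :=
  [multinom if unlift ord_max i is Some i' then m i' else (d - mdeg m)%N | i < n.+1].
have f_inj : injective f.
  move=> m1 m2 /mnmP f12; apply/val_inj/mnmP => i.
  by have := f12 (lift ord_max i); rewrite !mnmE liftK.
have f_deg m : mdeg (f m) = d.
  rewrite mdegE big_ord_recr /= mnmE unlift_none.
  have -> : (\sum_(i < n) f m (widen_ord (leqnSn n) i))%N = mdeg m.
    rewrite mdegE; apply: eq_bigr => i _; rewrite mnmE.
    have -> : widen_ord (leqnSn n) i = lift ord_max i.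
      by apply: val_inj; rewrite /= /bump leqNgt ltn_ord.
    by rewrite liftK.
  by rewrite subnKC // -ltnS bmdeg.
rewrite /Ndim addnC -(size_basis n d) cardE -(size_map f).
apply: uniq_leq_size; first by rewrite map_inj_uniq ?enum_uniq.
by move=> _ /mapP [m _ ->]; rewrite -basis_cover f_deg.
Qed.

Section Distances.
Context {R : realType} {n : nat}.
Implicit Types x y : 'rV[R]_n.

Definition l1norm x : R := \sum_(j < n) `|x ord0 j|.

Lemma edist_ge0 x y : 0 <= edist x y.
Proof. exact: sqrtr_ge0. Qed.

Lemma edistxx x : edist x x = 0.
Proof. by rewrite /edist big1 ?sqrtr0 // => i _; rewrite subrr expr0n. Qed.

Lemma coord_dist_le_edist x y j : `|x ord0 j - y ord0 j| <= edist x y.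
Proof.
rewrite /edist -sqrtr_sqr ler_sqrt; last by apply: sumr_ge0 => i _; exact: sqr_ge0.
by rewrite (bigD1 j) //= lerDl; apply: sumr_ge0 => i _; exact: sqr_ge0.
Qed.

Lemma edist_eq0 x y : edist x y = 0 -> x = y.
Proof.
move=> xy0; apply/rowP => j; apply/eqP; rewrite -subr_eq0 -normr_le0 -xy0.
exact: coord_dist_le_edist.
Qed.

Lemma l1norm_ge0 x : 0 <= l1norm x.
Proof. exact: sumr_ge0. Qed.

Lemma norm_coord_le_l1norm x j : `|x ord0 j| <= l1norm x.
Proof. by rewrite /l1norm (bigD1 j) //= lerDl; exact: sumr_ge0. Qed.

Lemma ler_l1normD x y : l1norm (x + y) <= l1norm x + l1norm y.
Proof. by rewrite -big_split; apply: ler_sum => j _; rewrite mxE ler_normD. Qed.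

Lemma l1normN x : l1norm (- x) = l1norm x.
Proof. by apply: eq_bigr => j _; rewrite mxE normrN. Qed.

Lemma edist_le_l1norm x y : edist x y <= l1norm (x - y).
Proof.
have S0 := l1norm_ge0 (x - y).
rewrite /edist -[leRHS](ger0_norm S0) -sqrtr_sqr ler_sqrt ?sqr_ge0 //.
rewrite expr2 {2}/l1norm mulr_sumr; apply: ler_sum => j _.
rewrite -[leLHS]real_normK ?num_real // expr2 [in leRHS]mulrC !mxE.
by apply: ler_wpM2l => //; have := norm_coord_le_l1norm (x - y) j; rewrite !mxE.
Qed.

Lemma l1norm_le_edist x y : l1norm (x - y) <= edist x y *+ n.
Proof.
rewrite -[X in _ *+ X](card_ord n) -sumr_const; apply: ler_sum => j _.
by rewrite !mxE; exact: coord_dist_le_edist.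
Qed.

Lemma edist_le_l1normD x y : edist x y <= l1norm x + l1norm y.
Proof.
by apply: le_trans (edist_le_l1norm x y) _; rewrite -(l1normN y) ler_l1normD.
Qed.

Lemma compact_l1norm_bounded (X : set 'rV[R]_n) : compact X ->
  exists M, forall x, X x -> l1norm x <= M.
Proof.
move=> /compact_bounded [M0 [_ hM]].
have := hM (`|M0| + 1) (ltr_pwDr ltr01 (ler_norm M0)); set B := `|M0| + 1 => hB.
exists (B *+ n) => x Xx; rewrite -[X in _ *+ X](card_ord n) -sumr_const; apply: ler_sum => j _.
apply: le_trans (hB x Xx).
rewrite [leRHS]mx_normrE.
exact: (le_bigmax _ (fun ij : 'I_1 * 'I_n => `|x ij.1 ij.2|) (ord0, j)).
Qed.

End Distances.

Lemma norm_delta_le (R : realType) n d (y : 'rV[R]_n) (m : 'X_{1..n < d.+1}) :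
  `|delta d y m| <= (1 + l1norm y) ^+ d.
Proof.
have y1 : 1 <= 1 + l1norm y by rewrite lerDl l1norm_ge0.
rewrite ffunE mevalX normr_prod.
apply: le_trans (_ : \prod_(i < n) (1 + l1norm y) ^+ m i <= _).
  apply: ler_prod => i _; rewrite normr_ge0 normrX lerXn2r ?nnegrE //.
  - exact: le_trans y1.
  - by apply: le_trans (norm_coord_le_l1norm y i) _; rewrite lerDr.
rewrite prodrXr -mdegE ler_weXn2l //; by have := bmdeg m; rewrite ltnS.
Qed.

Lemma norm_row_mulmx_le (R : numDomainType) k l (u : 'rV[R]_k) (M : 'M[R]_(k, l)) Q i :
  (forall j, `|u ord0 j| <= Q) -> `|(u *m M) ord0 i| <= Q * \sum_j \sum_i' `|M j i'|.
Proof.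
move=> uQ; rewrite mxE mulr_sumr; apply: le_trans (ler_norm_sum _ _ _) _.
apply: ler_sum => j _; rewrite normrM; apply: ler_pM => //.
by rewrite (bigD1 i) //= lerDl; exact: sumr_ge0.
Qed.

Section SelfSimilitudes.
Context {R : realType} {n : nat}.
Variable X : set 'rV[R]_n.
Implicit Types (x y : 'rV[R]_n) (r : R) (phi psi : 'rV[R]_n -> 'rV[R]_n).

Definition self_similitude (r : R) (psi : 'rV[R]_n -> 'rV[R]_n) : Prop :=
  [/\ exists2 A : 'M[R]_n, A \in unitmx & exists t, forall x, psi x = x *m A + t,
      0 < r,
      forall x y, edist (psi x) (psi y) = r * edist x y &
      forall x, X x -> X (psi x)].

Lemma self_similitude_id : self_similitude 1 id.
Proof.
split=> // [|x y]; last by rewrite mul1r.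
by exists 1%:M; [exact: unitmx1 | exists 0 => x; rewrite mulmx1 addr0].
Qed.

Lemma self_similitude_comp (r1 r2 : R) (psi1 psi2 : 'rV[R]_n -> 'rV[R]_n) :
  self_similitude r1 psi1 -> self_similitude r2 psi2 ->
  self_similitude (r1 * r2) (psi1 \o psi2).
Proof.
move=> [[A1 A1U [t1 psi1E]] r1_gt0 psi1_sim psi1X].
move=> [[A2 A2U [t2 psi2E]] r2_gt0 psi2_sim psi2X].
split=> [|||x Xx]; last by apply/psi1X/psi2X.
- exists (A2 *m A1); first by rewrite unitmx_mul A1U A2U.
  by exists (t2 *m A1 + t1) => x; rewrite /= psi2E psi1E mulmxDl mulmxA addrA.
- exact: mulr_gt0.
- by move=> x y; rewrite /= psi1_sim psi2_sim mulrA.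
Qed.

Lemma similarity_self_similitude phi :
  similarity phi -> (forall x, X x -> X (phi x)) -> exists r, self_similitude r phi.
Proof.
move=> [[A [t phiE]] [r [r_gt0 phi_sim]]] phiX; exists r; split=> //.
exists A; last by exists t.
rewrite -row_free_unit; apply: inj_row_free => v vA0.
have : r * edist v 0 = 0 by rewrite -phi_sim !phiE vA0 mul0mx edistxx.
by move/eqP; rewrite mulf_eq0 gt_eqF //= => /eqP/edist_eq0.
Qed.

Lemma contraction_ratio_lt1 phi r : (0 < n)%N -> contraction phi ->
  (forall x y, edist (phi x) (phi y) = r * edist x y) -> r < 1.
Proof.
move=> n_gt0 [K [/andP[_ K_lt1] phiK]] phi_sim.
pose e (a : R) : 'rV[R]_n := const_mx a.
have e_ge1 : 1 <= edist (e 1) (e 0).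
  by have := coord_dist_le_edist (e 1) (e 0) (Ordinal n_gt0); rewrite !mxE subr0 normr1.
have := phiK (e 1) (e 0); rewrite phi_sim ler_pM2r ?(lt_le_trans ltr01) // => rK.
exact: le_lt_trans K_lt1.
Qed.

Lemma self_similitudes_iterate {p} {phi : 'I_p -> 'rV[R]_n -> 'rV[R]_n} {lam : 'I_p -> R}
    theta :
  (forall i, self_similitude (lam i) (phi i)) -> (forall i, lam i <= theta) ->
  X `<=` \bigcup_(i in [set: 'I_p]) (phi i @` X) ->
  forall s, X s -> forall L,
  exists r psi, [/\ self_similitude r psi, r <= theta ^+ L & (psi @` X) s].
Proof.
move=> phi_sim lam_le Xcover s Xs; elim=> [|L [r [psi [psi_sim r_le [z Xz psiz]]]]].
  by exists 1, id; split; [exact: self_similitude_id | rewrite expr0 | exists s].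
have [i _ [y Xy phiy]] := Xcover z Xz.
exists (r * lam i), (psi \o phi i); split.
- exact: self_similitude_comp.
- have [_ r_gt0 _ _] := psi_sim; have [_ lam_gt0 _ _] := phi_sim i.
  by rewrite exprSr ler_pM // ltW.
- by exists y => //=; rewrite phiy.
Qed.

End SelfSimilitudes.

Lemma exists_expr_lt {R : realType} {theta eps : R} : 0 <= theta -> theta < 1 -> 0 < eps ->
  exists L, theta ^+ L < eps.
Proof.
move=> theta_ge0 theta_lt1 eps_gt0.
have theta_cvg : (GRing.exp theta) @ \oo --> 0 by apply: cvg_expr; rewrite ger0_norm.
have [L _ hL] := cvgr_dist_lt _ _ theta_cvg _ eps_gt0.
by exists L; have := hL L (leqnn L); rewrite /= sub0r normrN ger0_norm ?exprn_ge0.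
Qed.

Lemma self_similar_zoom {R : realType} {n : nat} {X : set 'rV[R]_n} :
  (0 < n)%N -> self_similar X ->
  forall s, X s -> forall eps, 0 < eps ->
  exists r psi, [/\ self_similitude X r psi, r < eps & (psi @` X) s].
Proof.
move=> n_gt0 [p [phi [_ [phi_sim [_ [_ Xcover]]]]]] s Xs eps eps_gt0.
have phiX i x : X x -> X (phi i x) by move=> Xx; rewrite Xcover; exists i => //; exists x.
have lam_ex i : exists lam, self_similitude X lam (phi i) /\ lam < 1.
  have [lam lam_sim] := similarity_self_similitude X _ (proj2 (phi_sim i)) (phiX i).
  exists lam; split => //; case: lam_sim => _ _ lamE _.
  exact: contraction_ratio_lt1 n_gt0 (proj1 (phi_sim i)) lamE.
have [lam /all_and2[lam_sim lam_lt1]] := boolp.choice lam_ex.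
pose theta := \big[Num.max/0]_i lam i.
have theta_ge0 : 0 <= theta.
  rewrite /theta; elim/big_ind: _ => // [x y x_ge0 _|i _]; first by rewrite le_max x_ge0.
  by have [_ /ltW] := lam_sim i.
have theta_lt1 : theta < 1 by apply: bigmax_lt.
have [L thetaL] := exists_expr_lt theta_ge0 theta_lt1 eps_gt0.
have Xsub : X `<=` \bigcup_(i in [set: 'I_p]) (phi i @` X) by rewrite -Xcover.
have [r [psi [psi_sim rL psis]]] :=
  self_similitudes_iterate X theta lam_sim (fun i => le_bigmax _ _ i) Xsub _ Xs L.
by exists r, psi; split => //; exact: le_lt_trans thetaL.
Qed.

Section Bundles.
Context {R : realType} {n : nat} (d N : nat).
Variable X : set 'rV[R]_n.
Implicit Types (a s : 'rV[R]_n) (xi : dualP R n d) (E : bundle R n d).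

Lemma lspan_comb (I : finType) (S : set (dualP R n d)) (c : I -> R) (v : I -> dualP R n d) :
  (forall i, S (v i)) -> lspan S (\sum_i c i *: v i).
Proof.
move=> Sv; exists [seq (c i, v i) | i <- enum I]; split; last by rewrite big_map big_enum.
by move=> _ /mapP[i _ ->]; exact: Sv.
Qed.

Lemma Eprime_mono {E E' a xi} : (forall a xi, E a xi -> E' a xi) ->
  Eprime N X E a xi -> Eprime N X E' a xi.
Proof.
move=> EE' [Xa near_a]; split=> // eps eps_gt0.
have [as_ [eta [[Xas [xis [Exis rest]]] near]]] := near_a eps eps_gt0.
by exists as_, eta; split=> //; split=> //; exists xis; split=> // i; apply: EE'.
Qed.

Lemma Eprime_E0_of_combinations {k s xi} : (k <= N.+1)%N -> X s ->
  (forall eps, 0 < eps -> exists (a : 'I_k -> 'rV[R]_n) (w : 'I_k -> R),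
     [/\ forall i, X (a i), forall i, edist (a i) s < eps,
         xi = \sum_i w i *: delta d (a i) &
         forall i j, edist (a i) (a j) ^+ d * `|w i| <= 1]) ->
  Eprime N X (E0 d X) s xi.
Proof.
move=> kN Xs comb; split=> // eps eps_gt0.
have [a [w [Xa near_s xiE spread]]] := comb eps eps_gt0.
(* Pad the k points to N+1 points with copies of s carrying coefficient 0. *)
pose as_ (i : 'I_N.+1) := oapp a s (insub (val i)).
pose co (i : 'I_N.+1) := oapp w 0 (insub (val i)).
pose F (i : nat) := oapp (fun j => w j *: delta d (a j)) 0 (insub i).
exists as_, xi; split; last split.
- split=> [i|]; first by rewrite /as_; case: insub.
  exists (fun i => co i *: delta d (as_ i)); split; last split.
  + by move=> i; split; [rewrite /as_; case: insub | exists (co i)].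
  + have -> : \sum_(i < N.+1) co i *: delta d (as_ i) = \sum_(i < N.+1) F i.
      by apply: eq_bigr => i _; rewrite /co /as_ /F; case: insub => [j|]; rewrite ?scale0r.
    have -> : \sum_(i < N.+1) F i = \sum_(i < N.+1 | (i < k)%N) F i.
      rewrite [RHS]big_mkcond; apply: eq_bigr => i _.
      by case: ltnP => // ik; rewrite /F insubN // -leqNgt.
    rewrite -(big_ord_widen _ F kN) xiE; apply: eq_bigr => i _.
    by rewrite /F valK.
  + move=> i al; rewrite dappZ delta_shiftmon.
    case: eqP => [-> |_]; last by rewrite mulr0 normr0 mulr0.
    rewrite mdeg0 subn0 mulr1 /co /as_.
    case: insubP => [j _ _|_]; last by rewrite normr0 mulr0.
    have k_gt0 : (0 < k)%N by apply: leq_ltn_trans (ltn_ord j).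
    by rewrite insubT /=; apply: spread.
- by move=> i; rewrite /as_; case: insub => [j|] /=; rewrite ?edistxx.
- by move=> m; rewrite subrr normr0.
Qed.

Lemma delta_in_Eprime_E0 a : X a -> Eprime N X (E0 d X) a (delta d a).
Proof.
move=> Xa; apply: (@Eprime_E0_of_combinations 1) => // eps eps_gt0.
exists (fun=> a), (fun=> 1); split=> //.
- by move=> _; rewrite edistxx.
- by rewrite big_ord1 scale1r.
- by move=> _ _; rewrite edistxx normr1 mulr1 expr0n; case: (d == 0%N).
Qed.

Lemma E0_sub_Eseq k a xi : E0 d X a xi -> Eseq d N X k a xi.
Proof.
elim: k a xi => [//|k IHk] a xi [Xa [lam ->]]; split=> //.
have -> : lam *: delta d a = \sum_(i < 1) (fun=> lam) i *: (fun=> delta d a) i.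
  by rewrite big_ord1.
apply: lspan_comb => _.
by apply: Eprime_mono (delta_in_Eprime_E0 _ Xa) => a' xi'; exact: IHk.
Qed.

End Bundles.

Section ZoomedDeltas.
Context {R : realType} {n : nat} (d N : nat).
Context {X : set 'rV[R]_n} {s : 'rV[R]_n} {M : R}.
Context {b : 'I_(nmonomials n d) -> 'rV[R]_n}.
Hypotheses (Xs : X s) (X_l1 : forall x, X x -> l1norm x <= M).
Hypotheses (Xb : forall i, X (b i)) (bU : delta_mx d b \in unitmx).
Hypothesis KN : (nmonomials n d <= N.+1)%N.
Hypothesis zoom : forall eps, 0 < eps ->
  exists r psi, [/\ self_similitude X r psi, r < eps & (psi @` X) s].

Let coef y := dual_row d (delta d y) *m invmx (delta_mx d b).
Let G := \sum_l \sum_i `|invmx (delta_mx d b) l i|.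

Lemma delta_affine_decomp (A : 'M[R]_n) t y :
  delta d (y *m A + t) = \sum_i coef y ord0 i *: delta d (b i *m A + t).
Proof. exact/delta_affine_comb/delta_decomp. Qed.

Lemma norm_coef_le y i : `|coef y ord0 i| <= (1 + l1norm y) ^+ d * G.
Proof. by apply: norm_row_mulmx_le => l; rewrite mxE; exact: norm_delta_le. Qed.

Lemma edist_le_diam x y : X x -> X y -> edist x y <= M *+ 2.
Proof.
move=> Xx Xy; rewrite mulr2n.
exact: le_trans (edist_le_l1normD x y) (lerD (X_l1 _ Xx) (X_l1 _ Xy)).
Qed.

Lemma self_similitude_l1norm_le r psi y z : self_similitude X r psi -> r <= 1 -> X z ->
  r * l1norm y <= M + edist (psi y) (psi z) *+ n.
Proof.
move=> [_ r_gt0 psi_dist _] r_le1 Xz.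
have := ler_l1normD z (y - z); rewrite addrC subrK => l1y.
apply: le_trans (ler_wpM2l (ltW r_gt0) l1y) _; rewrite mulrDr; apply: lerD.
  by apply: le_trans (X_l1 _ Xz); rewrite ler_piMl ?l1norm_ge0.
by rewrite psi_dist -mulrnAr; apply: ler_wpM2l; [exact: ltW | exact: l1norm_le_edist].
Qed.

Lemma scaled_delta_in_Eprime c :
  exists C, 0 < C /\ Eprime N X (E0 d X) s (C^-1 *: delta d c).
Proof.
have M_ge0 : 0 <= M := le_trans (l1norm_ge0 s) (X_l1 _ Xs).
have G_ge0 : 0 <= G by do 2!apply: sumr_ge0 => ? _.
pose D := M *+ 2; have D_ge0 : 0 <= D by rewrite mulrn_wge0.
pose H := 1 + M + edist c s *+ n.
have H_ge0 : 0 <= H by rewrite !addr_ge0 ?mulrn_wge0 ?edist_ge0.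
(* With w := coef y for psi y = c:
   |psi b_i - psi b_j|^d |w_i| <= (r D)^d (1 + |y|_1)^d G <= (D H)^d G, whatever the ratio r. *)
pose C := (D * H) ^+ d * G + 1.
have C_gt0 : 0 < C by rewrite ltr_pwDr // mulr_ge0 // exprn_ge0 // mulr_ge0.
exists C; split=> //; apply: (Eprime_E0_of_combinations d N X KN Xs) => eps eps_gt0.
have eps'_gt0 : 0 < Num.min 1 (eps / (D + 1)) by rewrite lt_min ltr01 divr_gt0 ?ltr_pwDr.
have [r [psi [psi_sim]]] := zoom _ eps'_gt0.
rewrite lt_min => /andP[r_lt1 r_lt_eps] [z Xz psiz].
have [[A AU [t psiE]] r_gt0 psi_dist psiX] := psi_sim.
have r_ge0 := ltW r_gt0.
pose y := (c - t) *m invmx A.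
have psiy : psi y = c by rewrite psiE mulmxKV // subrK.
have rH : r * (1 + l1norm y) <= H.
  rewrite mulrDr mulr1 /H -addrA; apply: lerD; first exact: ltW.
  by have := self_similitude_l1norm_le _ _ y _ psi_sim (ltW r_lt1) Xz; rewrite psiy psiz.
have psib_dist i x : X x -> edist (psi (b i)) (psi x) <= r * D.
  by move=> Xx; rewrite psi_dist; apply: ler_wpM2l => //; exact: edist_le_diam.
exists (psi \o b), (fun i => coef y ord0 i / C); split.
- by move=> i; apply/psiX/Xb.
- move=> i; rewrite -psiz; apply: le_lt_trans (psib_dist i z Xz) _.
  apply: le_lt_trans (_ : r * (D + 1) < eps); last by rewrite -ltr_pdivlMr ?ltr_pwDr.
  by apply: ler_wpM2l; rewrite ?lerDl.
- rewrite -psiy psiE delta_affine_decomp scaler_sumr; apply: eq_bigr => i _.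
  by rewrite /= psiE scalerA mulrC.
- move=> i j; rewrite /= normrM normfV (gtr0_norm C_gt0) mulrA ler_pdivrMr // mul1r.
  apply: le_trans (_ : (D * H) ^+ d * G <= C); last by rewrite lerDl.
  apply: le_trans (_ : (r * D) ^+ d * ((1 + l1norm y) ^+ d * G) <= _).
    apply: ler_pM; rewrite ?exprn_ge0 ?edist_ge0 ?norm_coef_le //.
    by apply: lerXn2r; rewrite ?nnegrE ?mulr_ge0 ?edist_ge0 ?psib_dist.
  have -> : (r * D) ^+ d * ((1 + l1norm y) ^+ d * G) = (D * (r * (1 + l1norm y))) ^+ d * G.
    by rewrite !exprMn; ring.
  have y_ge0 : 0 <= 1 + l1norm y by rewrite addr_ge0 ?l1norm_ge0.
  apply: ler_wpM2r => //; apply: lerXn2r; rewrite ?nnegrE ?mulr_ge0 //.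
  exact: ler_wpM2l.
Qed.

End ZoomedDeltas.

Theorem theorem5p2 (R : realType) (n d : nat) (X : set 'rV[R]_n) :
  (1 <= n)%N ->
  self_similar X ->
  Hdeg_ge X d.+1 ->
  forall s : 'rV[R]_n, X s ->
  forall xi : dualP R n d, paratangent d (Ndim n d).-1 X s xi.
Proof.
move=> n_gt0 X_ss hX s Xs xi.
have [_ [_ [_ [_ [_ [X_cpt _]]]]]] := X_ss.
have [M X_l1] := compact_l1norm_bounded _ X_cpt.
have [b [Xb bU]] := exists_unisolvent_points d X hX.
have Ndim_gt0 : (0 < Ndim n d)%N by rewrite bin_gt0 leq_addl.
have KN : (nmonomials n d <= (Ndim n d).-1.+1)%N.
  by rewrite prednK // card_bmultinom_le.
have zoom := self_similar_zoom n_gt0 X_ss s Xs.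
have [C C_spec] := boolp.choice (fun j => scaled_delta_in_Eprime d _ Xs X_l1 Xb bU KN zoom (b j)).
rewrite /paratangent -[(2 * _)%N]prednK ?muln_gt0 //; split=> //.
pose w := dual_row d xi *m invmx (delta_mx d b).
rewrite (delta_decomp d b xi bU) -/w.
rewrite (eq_bigr (fun j => (w ord0 j * C j) *: ((C j)^-1 *: delta d (b j)))); last first.
  by move=> j _; rewrite scalerA -mulrA mulfV ?mulr1 // lt0r_neq0 // (proj1 (C_spec j)).
apply: lspan_comb => j; apply: Eprime_mono (proj2 (C_spec j)) => a xi'.
exact: E0_sub_Eseq.
Qed.
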